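(* Let $G$ be a digraph with a fixed upward planar drawing and let $P$ and $Q$ be vertex disjoint directed paths in $G$. Then either $\mathrm{Right}(P)\cap Q=\emptyset$ or $\mathrm{Left}(P)\cap Q=\emptyset$.
   Context: An upward planar drawing of a digraph is a plane drawing (no edge crossings) in which every directed edge is a curve monotone increasing in the $y$-direction from tail to head. A path is identified with the set of points of $\mathbb{R}^2$ in its drawing. For a path $P$ with endpoints $(x,y)$ and $(x',y')$, $y\le y'$, define $\mathrm{Right}(P):=\{(u,v)\in\mathbb{R}^2: y\le v\le y' \text{ and } u'<u \text{ for all } u' \text{ with } (u',v)\in P\}$ and $\mathrm{Left}(P):=\{(u,v)\in\mathbb{R}^2: y\le v\le y' \text{ and } u'>u \text{ for all } u' \text{ with } (u',v)\in P\}$. *)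

From HB Require Import structures.
From mathcomp Require Import all_boot all_order all_algebra.
From mathcomp Require Import all_classical all_reals topology normedtype.
Set Implicit Arguments. Unset Strict Implicit. Unset Printing Implicit Defensive.
Import Order.TTheory GRing.Theory Num.Theory numFieldNormedType.Exports.
Local Open Scope classical_set_scope.
Local Open Scope ring_scope.

(* A drawing of a digraph (V, E): a position for every vertex and, for every
   ordered pair (u, v), a parametrized curve [0,1] -> R^2 (only meaningful
   when E u v). *)
Record drawing (R : realType) (V : finType) := Drawing {
  vpos : V -> R * R;
  ecurve : V -> V -> R -> R * R }.

Definition edge_img (R : realType) (V : finType) (D : drawing R V) (u v : V)
  : set (R * R) :=
  [set p | exists t : R, 0 <= t <= 1 /\ p = ecurve D u v t].

Definition upward_planar_drawing (R : realType) (V : finType) (E : rel V)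
  (D : drawing R V) : Prop :=
  injective (vpos D) /\
  (forall u v, E u v ->
     [/\ ecurve D u v 0 = vpos D u, ecurve D u v 1 = vpos D v,
         {within [set r : R | 0 <= r <= 1], continuous (ecurve D u v)} &
         forall s t : R, 0 <= s -> s < t -> t <= 1 ->
           (ecurve D u v s).2 < (ecurve D u v t).2]) /\
  (forall u v w t, E u v -> 0 < t < 1 -> ecurve D u v t <> vpos D w) /\
  (forall u1 v1 u2 v2 p, E u1 v1 -> E u2 v2 -> (u1, v1) <> (u2, v2) ->
     edge_img D u1 v1 p -> edge_img D u2 v2 p ->
     exists w, [/\ w \in [:: u1; v1], w \in [:: u2; v2] & p = vpos D w]).

Definition dipath (V : finType) (E : rel V) (x : V) (s : seq V) : bool :=
  path E x s && uniq (x :: s).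

Definition path_pts (R : realType) (V : finType) (D : drawing R V)
  (x : V) (s : seq V) : set (R * R) :=
  [set p | (exists2 v, v \in x :: s & p = vpos D v) \/
           (exists u v, (u, v) \in zip (x :: s) s /\ edge_img D u v p)].

Definition RightP (R : realType) (V : finType) (D : drawing R V)
  (x : V) (s : seq V) : set (R * R) :=
  [set q | (vpos D x).2 <= q.2 <= (vpos D (last x s)).2 /\
           forall q', path_pts D x s q' -> q'.2 = q.2 -> q'.1 < q.1].

Definition LeftP (R : realType) (V : finType) (D : drawing R V)
  (x : V) (s : seq V) : set (R * R) :=
  [set q | (vpos D x).2 <= q.2 <= (vpos D (last x s)).2 /\
           forall q', path_pts D x s q' -> q'.2 = q.2 -> q'.1 > q.1].

(* Both paths are graphs x = f(y), x = g(y) of continuous functions over their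
   height ranges: each edge is such a graph because its height is a continuous
   increasing function of the parameter, hence has a continuous inverse, and
   consecutive edges glue at common vertices.  A point of Q in Right(P) and one
   in Left(P) give heights where g - f takes opposite signs, so by the
   intermediate value theorem P and Q share a point.  Planarity turns a shared
   point into a shared vertex, contradicting vertex disjointness. *)

From HB Require Import structures.
From mathcomp Require Import all_boot all_order all_algebra.
From mathcomp Require Import all_classical all_reals topology normedtype realfun.
From mathcomp Require Import lra.
Import Order.TTheory GRing.Theory Num.Theory numFieldNormedType.Exports.
Local Open Scope classical_set_scope.
Local Open Scope ring_scope.
Set Implicit Arguments. Unset Strict Implicit. Unset Printing Implicit Defensive.

Section XGraph.
Variable R : realType.

Definition xgraph (a b : R) (f : R -> R) : set (R * R) :=
  [set p | a <= p.2 <= b /\ p.1 = f p.2].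

Definition continuous_xgraph (a b : R) (S : set (R * R)) :=
  exists2 f : R -> R, {within `[a, b], continuous f} & S = xgraph a b f.

Lemma continuous_xgraph_at a b S h : continuous_xgraph a b S ->
  a <= h <= b -> exists2 p, S p & p.2 = h.
Proof. by move=> [f _ ->] abh; exists (f h, h). Qed.

Lemma continuous_xgraph1 (p : R * R) : continuous_xgraph p.2 p.2 [set p].
Proof.
exists (fun=> p.1); first exact: cst_continuous.
apply/seteqP; split=> [q -> | [u v] /= [/andP[]]]; first by split; rewrite ?lexx.
move=> vp pv /= ->; rewrite [RHS]surjective_pairing.
by congr (_, _); apply/le_anti; rewrite vp pv.
Qed.

Lemma continuous_xgraphU a b c S T :
  continuous_xgraph a b S -> continuous_xgraph b c T -> S `&` T !=set0 ->
  continuous_xgraph a c (S `|` T).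
Proof.
move=> [f cf ->] [g cg ->] [p [[/andP[ap pb] fp] [/andP[bp pc] gp]]].
have pb' : p.2 = b by apply/le_anti; rewrite pb bp.
rewrite pb' in ap pc fp gp.
pose fg y := if y <= b then f y else g y.
exists fg.
  have -> : `[a, c]%classic = `[a, b]%classic `|` `[b, c]%classic.
    by apply/seteqP; split=> y /=; rewrite !in_itv /=; lra.
  have ef : {in `[a, b]%classic, f =1 fg}.
    by move=> y /set_mem /=; rewrite in_itv /= /fg => /andP[_ ->].
  have eg : {in `[b, c]%classic, g =1 fg}.
    move=> y /set_mem /=; rewrite in_itv /= /fg => /andP[yb0 _].
    case: leP => // yb; have yb2 : y = b by apply/le_anti; rewrite yb yb0.
    by rewrite yb2 -fp -gp.
  apply: withinU_continuous; [exact: interval_closed | exact: interval_closed | |].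
  - exact: (subspace_eq_continuous ef cf).
  - exact: (subspace_eq_continuous eg cg).
apply/seteqP; split=> q.
  case=> [][/andP[q1 q2] qx]; split; rewrite /= /fg ?qx;
    try (apply/andP; split; lra).
  - by rewrite q2.
  - case: leP => // qb; have qb2 : q.2 = b by apply/le_anti; rewrite qb q1.
    by rewrite qb2 -fp -gp.
case=> /andP[aq qc]; rewrite /fg; case: leP => qb qx.
  by left; split => //; apply/andP.
by right; split => //; apply/andP; split; lra.
Qed.

Lemma ivt_root (f : R -> R) a b : a <= b -> {within `[a, b], continuous f} ->
  f a * f b <= 0 -> exists2 c, c \in `[a, b] & f c = 0.
Proof.
move=> ab cf fab; apply: IVT => //.
rewrite ge_min le_max; apply/andP; split; apply/orP.
  by case: (leP (f a) 0) => fa; [left | right; nra].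
by case: (leP 0 (f a)) => fa; [left | right; nra].
Qed.

Lemma continuous_cross_root (f g : R -> R) a b c d h1 h2 :
  {within `[a, b], continuous f} -> {within `[c, d], continuous g} ->
  a <= h1 <= b -> c <= h1 <= d -> a <= h2 <= b -> c <= h2 <= d ->
  (f h1 - g h1) * (f h2 - g h2) <= 0 ->
  exists2 h, a <= h <= b /\ c <= h <= d & f h = g h.
Proof.
move=> cf cg.
wlog h12 : h1 h2 / h1 <= h2.
  move=> W; case: (leP h1 h2) => [|/ltW h21]; first exact: W.
  by move=> ? ? ? ?; rewrite mulrC; apply: W.
move=> /andP[a1 b1] /andP[c1 d1] /andP[a2 b2] /andP[c2 d2] sign.
have sub : `[h1, h2] `<=` `[a, b] `&` `[c, d].
  move=> y /=; rewrite !in_itv /= => /andP[hy yh].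
  by split; apply/andP; split; lra.
have cfg : {within `[h1, h2], continuous (f \- g)}.
  move=> y; apply: cvgB.
  - exact: (continuous_subspaceW (subset_trans sub (@subIsetl _ _ _))).
  - exact: (continuous_subspaceW (subset_trans sub (@subIsetr _ _ _))).
have [h hh fgh] := ivt_root h12 cfg sign.
have [] := sub h hh; rewrite /= !in_itv /= => abh cdh.
by exists h => //; apply/eqP; rewrite -subr_eq0; apply/eqP.
Qed.

Lemma continuous_xgraph_cross a b c d S T p1 q1 p2 q2 :
  continuous_xgraph a b S -> continuous_xgraph c d T ->
  S p1 -> T q1 -> p1.2 = q1.2 -> p1.1 < q1.1 ->
  S p2 -> T q2 -> p2.2 = q2.2 -> q2.1 < p2.1 ->
  S `&` T !=set0.
Proof.
move=> [f cf ->] [g cg ->] [ab1 f1] [cd1 g1] e1 l1 [ab2 f2] [cd2 g2] e2 l2.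
rewrite -e1 in cd1 g1; rewrite -e2 in cd2 g2.
have [|h [abh cdh] fgh] := continuous_cross_root cf cg ab1 cd1 ab2 cd2.
  by rewrite -f1 -f2 -g1 -g2; nra.
by exists (f h, h); split; split=> //=; rewrite fgh.
Qed.

End XGraph.

Lemma within_continuous_comp_within {U V W : topologicalType}
  (A : set U) (B : set V) (f : U -> V) (g : V -> W) :
  (forall x, A x -> B (f x)) ->
  {within A, continuous f} -> {within B, continuous g} ->
  {within A, continuous (g \o f)}.
Proof.
move=> fAB /subspace_continuousP cf /subspace_continuousP cg.
apply/subspace_continuousP => x Ax; apply: cvg_trans (cg _ (fAB _ Ax)) => Y /= BY.
apply: (@filterS _ (nbhs x) _ (fun z => A z -> B (f z) -> Y (g (f z)))).
  by move=> z fYz Az; exact: fYz Az (fAB _ Az).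
exact: cf x Ax _ BY.
Qed.

Section UpwardArc.
Variable R : realType.

Definition upward_arc (c : R -> R * R) :=
  {within `[0, 1], continuous c} /\
  forall s t, 0 <= s -> s < t -> t <= 1 -> (c s).2 < (c t).2.

Definition arc_img (c : R -> R * R) : set (R * R) :=
  [set p | exists t, 0 <= t <= 1 /\ p = c t].

Variable c : R -> R * R.
Hypothesis arc_c : upward_arc c.

Let ht t := (c t).2.

Lemma upward_arc_le s t : 0 <= s -> s <= t -> t <= 1 -> ht s <= ht t.
Proof.
case: arc_c => _ incr s0 st t1.
by case: (ltgtP s t) st => // [/(incr _ _ s0)/(_ t1)/ltW | ->].
Qed.

Lemma upward_arc_inj : {in `[0, 1] &, injective ht}.
Proof.
case: arc_c => _ incr s t; rewrite !in_itv /= => /andP[s0 s1] /andP[t0 t1] e.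
case: (ltgtP s t) => // [st | ts].
  by have := incr _ _ s0 st t1; rewrite -/(ht s) -/(ht t) e ltxx.
by have := incr _ _ t0 ts s1; rewrite -/(ht s) -/(ht t) e ltxx.
Qed.

Lemma upward_arc_height_range t : t \in `[0, 1] -> ht 0 <= ht t <= ht 1.
Proof.
by rewrite in_itv /= => /andP[t0 t1]; rewrite !upward_arc_le ?lexx ?ler01.
Qed.

Lemma continuous_upward_arc_height : {within `[0, 1], continuous ht}.
Proof.
by apply: within_continuous_comp arc_c.1 => -[u v] _; exact: cvg_snd.
Qed.

Lemma continuous_upward_arc_abscissa : {within `[0, 1], continuous (fun t => (c t).1)}.
Proof.
by apply: within_continuous_comp arc_c.1 => -[u v] _; exact: cvg_fst.
Qed.

Lemma upward_arc_height_surj y : ht 0 <= y <= ht 1 -> exists2 t, t \in `[0, 1] & ht t = y.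
Proof.
move=> y01; apply: IVT; [exact: ler01 | exact: continuous_upward_arc_height |].
by case/andP: y01 => y0 y1; rewrite ge_min le_max y0 y1 orbT.
Qed.

Lemma upward_arc_xgraph : continuous_xgraph (c 0).2 (c 1).2 (arc_img c).
Proof.
pose g y := xget 0 [set t | t \in `[0, 1] /\ ht t = y].
have gP y : ht 0 <= y <= ht 1 -> g y \in `[0, 1] /\ ht (g y) = y.
  move=> /upward_arc_height_surj [t t01 ty]; rewrite /g.
  by case: xgetP => // /(_ t) [].
have gK : {in `[0, 1], cancel ht g}.
  move=> t t01; have [gt01 e] := gP _ (upward_arc_height_range t01).
  exact: upward_arc_inj.
exists (fun y => (c (g y)).1).
  apply: (within_continuous_comp_within _ (segment_can_le_continuous ler01
    continuous_upward_arc_height gK) continuous_upward_arc_abscissa).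
  by move=> y /= /gP [].
apply/seteqP; split=> p.
  case=> t [t01 ->]; have t01' : t \in `[0, 1] by rewrite in_itv.
  by split; [exact: upward_arc_height_range | rewrite /= gK].
case=> y01 px; have [gy01 gy] := gP _ y01.
exists (g p.2); split; first by move: gy01; rewrite in_itv.
by rewrite [LHS]surjective_pairing [RHS]surjective_pairing px -/(ht (g p.2)) gy.
Qed.

End UpwardArc.

Lemma mem_zip_path (T : eqType) (e : rel T) x s u w : path e x s ->
  (u, w) \in zip (x :: s) s -> [/\ e u w, u \in x :: s & w \in x :: s].
Proof.
elim: s x => [|v s IH] x //= /andP[exv ps].
rewrite in_cons => /orP[/eqP [-> ->]|uw]; first by split => //; rewrite !inE eqxx ?orbT.
by have [euw us ws] := IH v ps uw; split => //; apply/orP; right.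
Qed.

Section UpwardPlanarDrawing.
Variables (R : realType) (V : finType) (E : rel V) (D : drawing R V).
Hypothesis HD : upward_planar_drawing E D.

Lemma edge_upward_arc u v : E u v -> upward_arc (ecurve D u v).
Proof. by move=> Euv; case: HD => _ [/(_ u v Euv) [_ _ ? ?] _]. Qed.

Lemma edge_img_tail u v : E u v -> edge_img D u v (vpos D u).
Proof.
by move=> Euv; case: HD => _ [/(_ u v Euv) [e0 _ _ _] _]; exists 0; rewrite lexx ler01.
Qed.

Lemma edge_img_head u v : E u v -> edge_img D u v (vpos D v).
Proof.
by move=> Euv; case: HD => _ [/(_ u v Euv) [_ e1 _ _] _]; exists 1; rewrite lexx ler01.
Qed.

Lemma edge_img_xgraph u v : E u v ->
  continuous_xgraph (vpos D u).2 (vpos D v).2 (edge_img D u v).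
Proof.
move=> Euv; case: HD => _ [/(_ u v Euv) [<- <- _ _] _].
exact: upward_arc_xgraph (edge_upward_arc Euv).
Qed.

Lemma edge_img_vpos u v w : E u v -> edge_img D u v (vpos D w) -> w = u \/ w = v.
Proof.
case: HD => inj [edges [inner _]] Euv [t [/andP[t0 t1] ew]].
have [e0 e1 _ _] := edges _ _ Euv.
case: (ltgtP 0 t) t0 => // [t_gt0 _ | t_eq0 _]; last first.
  by left; apply: inj; rewrite ew -t_eq0.
case: (ltgtP t 1) t1 => // [t_lt1 _ | t_eq1 _]; last first.
  by right; apply: inj; rewrite ew t_eq1.
by exfalso; apply: (inner u v w t Euv); rewrite ?t_gt0 ?t_lt1.
Qed.

Lemma path_pts_nil x : path_pts D x [::] = [set vpos D x].
Proof.
apply/seteqP; split=> [p [[w]|[u [w []]]] //| p ->]; first by rewrite inE => /eqP ->.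
by left; exists x; rewrite ?inE.
Qed.

Lemma path_pts_cons x v s : E x v ->
  path_pts D x (v :: s) = edge_img D x v `|` path_pts D v s.
Proof.
move=> Exv; apply/seteqP; split=> p.
  case=> [[w]|[u [w []]]].
    rewrite in_cons => /orP[/eqP -> ->|ws ->]; first by left; exact: edge_img_tail.
    by right; left; exists w.
  rewrite /= in_cons => /orP[/eqP [-> ->] xvp|uw uwp]; first by left.
  by right; right; exists u, w.
case=> [xvp|[[w ws ->]|[u [w [uw uwp]]]]].
- by right; exists x, v; rewrite /= in_cons eqxx.
- by left; exists w => //; rewrite in_cons ws orbT.
- by right; exists u, w; rewrite /= in_cons uw orbT.
Qed.

Lemma path_pts_first x s : path_pts D x s (vpos D x).
Proof. by left; exists x; rewrite ?inE ?eqxx. Qed.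

Lemma path_pts_xgraph x s : path E x s ->
  continuous_xgraph (vpos D x).2 (vpos D (last x s)).2 (path_pts D x s).
Proof.
elim: s x => [|v s IH] x /=.
  by rewrite path_pts_nil => _; exact: continuous_xgraph1.
case/andP=> Exv ps; rewrite path_pts_cons //.
apply: continuous_xgraphU (edge_img_xgraph Exv) (IH v ps) _.
by exists (vpos D v); split; [exact: edge_img_head | exact: path_pts_first].
Qed.

Lemma path_pts_vpos x s w : path E x s -> path_pts D x s (vpos D w) -> w \in x :: s.
Proof.
case: HD => inj _ ps [[w' w's /inj -> //]|[u [v [uv uvw]]]].
have [Euv us vs] := mem_zip_path ps uv.
by case: (edge_img_vpos Euv uvw) => ->.
Qed.

Lemma path_pts_disjoint x s y t : path E x s -> path E y t ->
  (forall v, v \in x :: s -> v \notin y :: t) ->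
  path_pts D x s `&` path_pts D y t = set0.
Proof.
move=> ps qt disj; rewrite -subset0 => p [Pp Qp].
case: (Pp) => [[w ws pw]|[u1 [v1 [uv1 uvp1]]]].
  by rewrite pw in Qp; move: (disj w ws); rewrite (path_pts_vpos qt Qp).
case: (Qp) => [[w wt pw]|[u2 [v2 [uv2 uvp2]]]].
  by rewrite pw in Pp; move: (disj w (path_pts_vpos ps Pp)); rewrite wt.
have [Euv1 u1s v1s] := mem_zip_path ps uv1.
have [Euv2 u2t v2t] := mem_zip_path qt uv2.
have ne12 : (u1, v1) <> (u2, v2) by case=> eu _; move: (disj u1 u1s); rewrite eu u2t.
case: HD => _ [_ [_ planar]].
have [w [w1 w2 _]] := planar _ _ _ _ p Euv1 Euv2 ne12 uvp1 uvp2.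
have ws : w \in x :: s by move: w1; rewrite !inE => /orP[] /eqP ->.
have wt : w \in y :: t by move: w2; rewrite !inE => /orP[] /eqP ->.
by move: (disj w ws); rewrite wt.
Qed.

End UpwardPlanarDrawing.

Theorem lemma5 (R : realType) (V : finType) (E : rel V) (D : drawing R V)
  (x : V) (s : seq V) (y : V) (t : seq V) :
  upward_planar_drawing E D ->
  dipath E x s -> dipath E y t ->
  (forall v : V, v \in x :: s -> v \notin y :: t) ->
  RightP D x s `&` path_pts D y t = set0 \/
  LeftP D x s `&` path_pts D y t = set0.
Proof.
move=> HD /andP[ps _] /andP[qt _] disj.
have PQ0 := path_pts_disjoint HD ps qt disj.
have gP := path_pts_xgraph HD ps; have gQ := path_pts_xgraph HD qt.
have [|/set0P [q1 [[h1 right1] Qq1]]] := eqVneq (RightP D x s `&` path_pts D y t) set0.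
  by left.
right; rewrite -subset0 => q2 [[h2 left2] Qq2].
have [p1 Pp1 e1] := continuous_xgraph_at gP h1.
have [p2 Pp2 e2] := continuous_xgraph_at gP h2.
have [p PQp] := continuous_xgraph_cross gP gQ Pp1 Qq1 e1 (right1 _ Pp1 e1)
  Pp2 Qq2 e2 (left2 _ Pp2 e2).
by rewrite PQ0 in PQp.
Qed.
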